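(* Let $n\ge 2$. Let $\hat a_{i,i-1}>0$ and $\hat b_{i,i-1}\in\mathbb{R}$ for $2\le i\le n$; for $1\le m\le k\le n$ put $\hat a_{k,m}:=\prod_{i=m+1}^{k}\hat a_{i,i-1}$ (so $\hat a_{k,k}=1$), and put $\hat b_{n,1}:=\sum_{k=2}^{n}\hat a_{n,k}\hat b_{k,k-1}$. Let $L_i\in\mathbb{R}$ ($2\le i\le n$) and $R_i\in\mathbb{R}$ ($1\le i\le n-1$) satisfy $L_i=\hat a_{i,i-1}R_{i-1}+\hat b_{i,i-1}$ for $2\le i\le n$ and $L_i\le R_i$ for $2\le i\le n-1$. Define $i^*$: if $\min_{2\le k\le n}\hat a_{k,1}\le1$, let $i^*\in\{2,\ldots,n\}$ be an index attaining $\min_{2\le k\le n}\hat a_{k,1}$; otherwise $i^*=1$. Suppose $i^*\ge 2$. Then $$\sum_{j=2}^{n}\bigl(L_j-R_{j-1}\bigr)\le(\hat a_{i^*,1}-1)R_1+\frac{\hat a_{n,i^*}-1}{\hat a_{n,i^*}}\,L_n+\frac{\hat b_{n,1}}{\hat a_{n,i^*}}.$$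
   Context: Setting: a timing packet traverses a chain of nodes $1,\ldots,n$; $L_i=\tau^{i,l}(t_{i,l})$ is the receive time-stamp and $R_i=\tau^{i,r}(t_{i,r})$ the send time-stamp of node $i$, produced by arbitrary ''left''/''right'' clocks. $\hat a_{i,i-1},\hat b_{i,i-1}$ are declared relative skews/offsets of adjacent nodes, $\hat a_{k,m}$ the skew product, and $\hat b_{n,1}$ the offset of the composition of the declared affine relations along the chain. The equation $L_i=\hat a_{i,i-1}R_{i-1}+\hat b_{i,i-1}$ is the skew-consistency condition and $L_i\le R_i$ is causality. *)

From HB Require Import structures.
From mathcomp Require Import all_boot all_order all_algebra.
Set Implicit Arguments. Unset Strict Implicit. Unset Printing Implicit Defensive.
Import Order.TTheory GRing.Theory Num.Theory.
Local Open Scope ring_scope.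

(* a i stands for \hat a_{i,i-1} (meaningful for 2 <= i <= n),
   b i stands for \hat b_{i,i-1}. *)

Definition ahat {R : ringType} (a : nat -> R) (k m : nat) : R :=
  \prod_(m.+1 <= i < k.+1) a i.

Definition bhat {R : ringType} (a b : nat -> R) (n : nat) : R :=
  \sum_(2 <= k < n.+1) ahat a n k * b k.

From HB Require Import structures.
From mathcomp Require Import all_boot all_order all_algebra.
From mathcomp Require Import zify ring.
Set Implicit Arguments. Unset Strict Implicit. Unset Printing Implicit Defensive.
Import Order.TTheory GRing.Theory Num.Theory.
Local Open Scope ring_scope.

(* Divide every time-stamp of node k by the cumulative skew \hat a_{k,1}.
   In these normalized units the link k-1 -> k has skew 1, so each link gap
   L_k - R_{k-1} becomes \hat b_{k,k-1} / \hat a_{k,1}, and telescoping gives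
   \hat b_{n,1} / \hat a_{n,1} = L_n/\hat a_{n,1} - R_1 - sum_k (R_k - L_k)/\hat a_{k,1}.
   Substituting this into the right-hand side collapses it to
   L_n - R_1 - \hat a_{i*,1} sum_k (R_k - L_k)/\hat a_{k,1}, while the left-hand
   side telescopes to L_n - R_1 - sum_k (R_k - L_k).  Causality makes every
   residence time R_k - L_k nonnegative, and minimality of \hat a_{i*,1} makes
   each weight \hat a_{i*,1}/\hat a_{k,1} at most 1. *)

Lemma telescope_interleaved (V : zmodType) (L R : nat -> V) (p m : nat) :
  (p < m)%N ->
  \sum_(p.+1 <= j < m.+1) (L j - R j.-1) =
  L m - R p - \sum_(p.+1 <= k < m) (R k - L k).
Proof.
elim: m => // m IH; rewrite ltnS leq_eqVlt => /predU1P[<- | lt_pm].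
  by rewrite big_nat1 big_geq // subr0.
rewrite big_nat_recr /=; last exact: ltnW.
rewrite (congr1 (+%R^~ _) (IH lt_pm)) big_nat_recr //=.
rewrite opprD opprB !addrA; congr (_ - _).
by rewrite addrC [RHS]addrC !addrA (addrC (L m.+1)).
Qed.

Section ChainSkew.

Variable R : numFieldType.
Implicit Types a b : nat -> R.

Lemma ahat_id a k : ahat a k k = 1.
Proof. by rewrite /ahat big_geq. Qed.

Lemma ahat_recr a k m : (m <= k)%N -> ahat a k.+1 m = ahat a k m * a k.+1.
Proof. by move=> le_mk; rewrite /ahat big_nat_recr. Qed.

Lemma ahat_cat a p k m : (m <= k <= p)%N ->
  ahat a p m = ahat a k m * ahat a p k.
Proof. by case/andP=> le_mk le_kp; rewrite /ahat (big_cat_nat _ (n := k.+1)). Qed.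

Lemma ahat_gt0 a k m : (forall i, (m < i <= k)%N -> 0 < a i) -> 0 < ahat a k m.
Proof.
move=> a_gt0; rewrite /ahat big_nat_cond.
by apply: prodr_gt0 => i /andP[/andP[lt_mi le_ik] _]; apply: a_gt0; lia.
Qed.

Lemma ahat_div a p k m : (forall i, (m < i <= p)%N -> 0 < a i) ->
  (m <= k <= p)%N -> ahat a p k = ahat a p m / ahat a k m.
Proof.
move=> a_gt0 hk; have: 0 < ahat a k m by apply: ahat_gt0 => i hi; apply: a_gt0; lia.
by move=> /gt_eqF/negbT Akm_neq0; rewrite (ahat_cat a hk) mulrAC mulfV ?mul1r.
Qed.

Lemma bhat_normalized a b n : (forall i, (1 < i <= n)%N -> 0 < a i) ->
  bhat a b n = ahat a n 1 * \sum_(2 <= k < n.+1) b k / ahat a k 1.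
Proof.
move=> a_gt0; rewrite /bhat mulr_sumr; apply: eq_big_nat => k hk.
by rewrite (ahat_div a_gt0) ?mulrA ?[_ / _ * _]mulrAC //; lia.
Qed.

Lemma normalized_link_gap a b (L T : nat -> R) k m :
  (m <= k)%N -> 0 < ahat a k m -> 0 < a k.+1 ->
  L k.+1 = a k.+1 * T k + b k.+1 ->
  L k.+1 / ahat a k.+1 m - T k / ahat a k m = b k.+1 / ahat a k.+1 m.
Proof.
move=> le_mk A_gt0 a_gt0 ->; rewrite ahat_recr //.
by field; rewrite !gt_eqF.
Qed.

Lemma ler_pM_sum_div (m p : nat) (c : R) (w x : nat -> R) : 0 < c ->
  (forall k, (m <= k < p)%N -> c <= w k) ->
  (forall k, (m <= k < p)%N -> 0 <= x k) ->
  c * \sum_(m <= k < p) x k / w k <= \sum_(m <= k < p) x k.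
Proof.
move=> c_gt0 c_le_w x_ge0; rewrite mulr_sumr; apply: ler_sum_nat => k hk.
have w_gt0 : 0 < w k by apply: lt_le_trans (c_le_w k hk).
rewrite mulrA ler_pdivrMr // mulrC.
by apply: ler_wpM2l; [exact: x_ge0 | exact: c_le_w].
Qed.

End ChainSkew.

(* The hypothesis \hat a_{i*,1} <= 1 only decides whether i* >= 2; the
   inequality itself does not need it. *)
Theorem lemma4 (R : realFieldType) (n : nat) (a b Lt Rt : nat -> R)
  (istar : nat) :
  (2 <= n)%N ->
  (forall i, (2 <= i <= n)%N -> 0 < a i) ->
  (forall i, (2 <= i <= n)%N -> Lt i = a i * Rt i.-1 + b i) ->
  (forall i, (2 <= i <= n.-1)%N -> Lt i <= Rt i) ->
  (* i* >= 2: the minimum of \hat a_{k,1} over 2 <= k <= n is <= 1 and is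
     attained at i* *)
  (2 <= istar <= n)%N ->
  (forall k, (2 <= k <= n)%N -> ahat a istar 1 <= ahat a k 1) ->
  ahat a istar 1 <= 1 ->
  \sum_(2 <= j < n.+1) (Lt j - Rt j.-1)
    <= (ahat a istar 1 - 1) * Rt 1
       + (ahat a n istar - 1) / ahat a n istar * Lt n
       + bhat a b n / ahat a n istar.
Proof.
move=> le2n a_gt0 skew causal istar_range istar_min _.
have A_gt0 k : (k <= n)%N -> 0 < ahat a k 1.
  by move=> le_kn; apply: ahat_gt0 => i hi; apply: a_gt0; lia.
set E := \sum_(2 <= k < n) (Rt k - Lt k) / ahat a k 1.
have normalized_sum : \sum_(2 <= k < n.+1) b k / ahat a k 1
    = Lt n / ahat a n 1 - Rt 1 - E.
  have := telescope_interleaved (fun k => Lt k / ahat a k 1)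
                                (fun k => Rt k / ahat a k 1) le2n.
  rewrite /= ahat_id divr1 => tele.
  rewrite /E; under [in RHS]eq_bigr do rewrite mulrBl; rewrite -tele.
  apply: eq_big_nat => k; case: k => // k hk.
  by rewrite (normalized_link_gap (b := b)) ?A_gt0 ?a_gt0 ?skew //; lia.
have Astar_gt0 : 0 < ahat a istar 1 by apply: A_gt0; lia.
have An_gt0 : 0 < ahat a n 1 by apply: A_gt0.
have An_istar : ahat a n istar = ahat a n 1 / ahat a istar 1.
  by apply: ahat_div => [i hi|]; [apply: a_gt0|]; lia.
rewrite telescope_interleaved // bhat_normalized => [|i hi]; last by apply: a_gt0; lia.
rewrite normalized_sum An_istar.
have -> : (ahat a istar 1 - 1) * Rt 1
    + (ahat a n 1 / ahat a istar 1 - 1) / (ahat a n 1 / ahat a istar 1) * Lt n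
    + ahat a n 1 * (Lt n / ahat a n 1 - Rt 1 - E) / (ahat a n 1 / ahat a istar 1)
    = Lt n - Rt 1 - ahat a istar 1 * E.
  by field; rewrite !gt_eqF.
rewrite lerD2l lerN2; apply: ler_pM_sum_div => // k hk.
- by apply: istar_min; lia.
- by rewrite subr_ge0; apply: causal; lia.
Qed.
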